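(* For all $\alpha\in\mathbb R$ and $\rho>1$, $$\lim_{n\to\infty}\max_{Q\in\mathcal P_n(\rho)}D_{\mathrm A}^{(\alpha)}(Q\|U_n)=\Delta(\alpha,\rho),$$ where, for $\alpha\notin\{0,1\}$, $$\Delta(\alpha,\rho)=\frac1{\alpha(\alpha-1)}\Bigg[\frac{\big(\frac{\rho^\alpha-1}{\alpha}\big)^{\alpha}\big(\frac{\rho-\rho^\alpha}{1-\alpha}\big)^{1-\alpha}}{\rho-1}-1\Bigg],$$ and $\Delta(1,\rho)=\Delta(0,\rho)=\frac{\rho\ln\rho}{\rho-1}-\ln\big(\frac{e\rho\ln\rho}{\rho-1}\big)$. In particular, for all $n\ge2$, $\max_{Q\in\mathcal P_n(\rho)}D(Q\|U_n)\le\frac{\rho\log\rho}{\rho-1}-\log\big(\frac{e\rho\ln\rho}{\rho-1}\big)$, and this bound is asymptotically tight as $n\to\infty$.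
   Context: $\mathcal P_n(\rho)$: probability mass functions on $\{1,\dots,n\}$ with all masses positive and ratio of maximal to minimal mass at most $\rho$; $U_n$ uniform on $\{1,\dots,n\}$. The Alpha-divergence is $D_{\mathrm A}^{(\alpha)}(P\|Q):=\sum_xQ(x)u_\alpha(P(x)/Q(x))$ with $u_\alpha(t)=\frac{t^\alpha-\alpha(t-1)-1}{\alpha(\alpha-1)}$ for $\alpha\notin\{0,1\}$, $u_1(t)=t\ln t+1-t$, $u_0(t)=-\ln t$. $D(P\|Q)=\sum_xP(x)\log\frac{P(x)}{Q(x)}$ with logarithm in an arbitrary base. *)

From Stdlib Require Import Reals Lra.
Open Scope R_scope.

Fixpoint rsum (n : nat) (f : nat -> R) : R :=
  match n with O => 0 | S k => rsum k f + f k end.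

(* P_n(rho): pmfs on {1..n}, represented on indices 0..n-1, all masses
   positive, ratio max/min <= rho *)
Definition in_P (n : nat) (rho : R) (Q : nat -> R) : Prop :=
  (forall i, (i < n)%nat -> 0 < Q i) /\
  rsum n Q = 1 /\
  (forall i j, (i < n)%nat -> (j < n)%nat -> Q i <= rho * Q j).

Definition unif (n : nat) : R := / INR n.

Definition u_alpha (alpha t : R) : R :=
  if Req_EM_T alpha 1 then t * ln t + 1 - t
  else if Req_EM_T alpha 0 then - ln t
  else (Rpower t alpha - alpha * (t - 1) - 1) / (alpha * (alpha - 1)).

Definition alphaDiv (n : nat) (alpha : R) (P Q : nat -> R) : R :=
  rsum n (fun x => Q x * u_alpha alpha (P x / Q x)).

Definition log_b (b x : R) : R := ln x / ln b.
Definition KL (n : nat) (b : R) (P Q : nat -> R) : R :=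
  rsum n (fun x => P x * log_b b (P x / Q x)).

Definition is_max_over_P (n : nat) (rho : R) (F : (nat -> R) -> R) (m : R) : Prop :=
  (exists Q, in_P n rho Q /\ F Q = m) /\
  (forall Q, in_P n rho Q -> F Q <= m).

Definition DeltaAlpha (alpha rho : R) : R :=
  if Req_EM_T alpha 1 then rho * ln rho / (rho - 1) - ln (exp 1 * rho * ln rho / (rho - 1))
  else if Req_EM_T alpha 0 then rho * ln rho / (rho - 1) - ln (exp 1 * rho * ln rho / (rho - 1))
  else / (alpha * (alpha - 1)) *
       (Rpower ((Rpower rho alpha - 1) / alpha) alpha *
        Rpower ((rho - Rpower rho alpha) / (1 - alpha)) (1 - alpha) / (rho - 1) - 1).

(* Divide Q in P_n(rho) by its smallest mass: Q = y / sum y with every y_i in [1, rho].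
   For each alpha, D_A^(alpha)(Q || U_n) is a function Psi_n (sum_i psi (y_i), sum_i y_i),
   and as a function of one coordinate y_m (the others fixed) its derivative is a positive
   factor times a nondecreasing one, so it is maximal at y_m = 1 or y_m = rho. Pushing the
   coordinates one by one to the endpoints, the maximum over P_n(rho) is attained at a
   vector with k masses proportional to rho and n - k to 1, where the divergence is g (k / n)
   for an explicit g on [0, 1]. Hence the maximum is max_(k <= n) g (k / n), which tends to
   max_[0,1] g; this last maximum is DeltaAlpha, by weighted AM-GM for alpha <> 0, 1 and by
   ln x <= x - 1 for alpha = 0, 1. In base b, D(Q || U_n) = D_A^(1)(Q || U_n) / ln b. *)

From Stdlib Require Import Reals Lra Lia.
From Coquelicot Require Import Coquelicot.
Open Scope R_scope.

Lemma rsum_ext n f g : (forall i, (i < n)%nat -> f i = g i) -> rsum n f = rsum n g.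
Proof.
  induction n as [|n IH]; intros Hfg; simpl; [reflexivity|].
  rewrite IH, Hfg; [reflexivity|lia|intros; apply Hfg; lia].
Qed.

Lemma rsum_affine n a b c f g :
  rsum n (fun i => a * f i + b * g i + c) = a * rsum n f + b * rsum n g + INR n * c.
Proof. induction n as [|n IH]; cbn [rsum]; [simpl; ring|rewrite IH, S_INR; ring]. Qed.

Lemma rsum_scal_l n a f : rsum n (fun i => a * f i) = a * rsum n f.
Proof. induction n as [|n IH]; simpl; [ring|rewrite IH; ring]. Qed.

Lemma rsum_const n c : rsum n (fun _ => c) = INR n * c.
Proof. induction n as [|n IH]; cbn [rsum]; [simpl; ring|rewrite IH, S_INR; ring]. Qed.

Lemma rsum_nonneg n f : (forall i, (i < n)%nat -> 0 <= f i) -> 0 <= rsum n f.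
Proof.
  induction n as [|n IH]; intros Hf; simpl; [lra|].
  assert (0 <= rsum n f) by (apply IH; intros; apply Hf; lia).
  assert (0 <= f n) by (apply Hf; lia). lra.
Qed.

Lemma rsum_pos n f : (0 < n)%nat -> (forall i, (i < n)%nat -> 0 < f i) -> 0 < rsum n f.
Proof.
  destruct n as [|n]; intros Hn Hf; [lia|]. simpl.
  assert (0 <= rsum n f) by (apply rsum_nonneg; intros; left; apply Hf; lia).
  assert (0 < f n) by (apply Hf; lia). lra.
Qed.

Definition normalize (n : nat) (y : nat -> R) : nat -> R := fun i => y i / rsum n y.

Definition replace_at (z : nat -> R) (m : nat) (t : R) : nat -> R :=
  fun i => if Nat.eqb i m then t else z i.

Lemma rsum_replace_at n z m t (h : R -> R) : (m < n)%nat ->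
  rsum n (fun i => h (replace_at z m t i))
  = h t + rsum n (fun i => if Nat.eqb i m then 0 else h (z i)).
Proof.
  induction n as [|n IH]; intros Hm; [lia|]. simpl. unfold replace_at at 2.
  destruct (Nat.eqb_spec n m) as [->|Hnm].
  - rewrite (rsum_ext m _ (fun i => h (z i))),
      (rsum_ext m (fun i => if Nat.eqb i m then 0 else h (z i)) (fun i => h (z i))); [ring| |];
      intros i Hi; unfold replace_at; destruct (Nat.eqb_spec i m); try lia; reflexivity.
  - rewrite IH by lia. ring.
Qed.

Lemma rsum_two_valued n rho z : (forall i, (i < n)%nat -> z i = 1 \/ z i = rho) ->
  exists k, (k <= n)%nat /\ forall h : R -> R,
    rsum n (fun i => h (z i)) = INR k * h rho + (INR n - INR k) * h 1.
Proof.
  induction n as [|n IH]; intros Hz.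
  - exists 0%nat. split; [lia|]. intros h. simpl. ring.
  - destruct IH as [k [Hk Hsum]]; [intros; apply Hz; lia|].
    destruct (Hz n ltac:(lia)) as [E|E].
    + exists k. split; [lia|]. intros h. cbn [rsum]. rewrite Hsum, E, S_INR. ring.
    + exists (S k). split; [lia|]. intros h. cbn [rsum]. rewrite Hsum, E, !S_INR. ring.
Qed.

Definition step_vector (rho : R) (k : nat) : nat -> R :=
  fun i => if Nat.ltb i k then rho else 1.

Lemma rsum_step_vector n k rho (h : R -> R) : (k <= n)%nat ->
  rsum n (fun i => h (step_vector rho k i)) = INR k * h rho + (INR n - INR k) * h 1.
Proof.
  induction n as [|n IH]; intros Hk.
  - replace k with 0%nat by lia. simpl. ring.
  - cbn [rsum]. unfold step_vector at 2. destruct (Nat.ltb_spec n k).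
    + replace k with (S n) by lia.
      rewrite (rsum_ext n _ (fun _ => h rho)), rsum_const, S_INR; [ring|].
      intros i Hi. unfold step_vector. destruct (Nat.ltb_spec i (S n)); [reflexivity|lia].
    + rewrite IH by lia. rewrite S_INR. ring.
Qed.

Lemma exists_argmin n (Q : nat -> R) : (0 < n)%nat ->
  exists i0, (i0 < n)%nat /\ forall i, (i < n)%nat -> Q i0 <= Q i.
Proof.
  induction n as [|n IH]; intros Hn; [lia|].
  destruct n as [|n].
  - exists 0%nat. split; [lia|]. intros i Hi. replace i with 0%nat by lia. lra.
  - destruct IH as [j [Hj Hmin]]; [lia|].
    destruct (Rle_dec (Q j) (Q (S n))).
    + exists j. split; [lia|]. intros i Hi.
      destruct (Nat.eq_dec i (S n)) as [->|]; [assumption|apply Hmin; lia].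
    + exists (S n). split; [lia|]. intros i Hi.
      destruct (Nat.eq_dec i (S n)) as [->|]; [lra|]. specialize (Hmin i ltac:(lia)). lra.
Qed.

Fixpoint max_upto (G : nat -> R) (m : nat) : R :=
  match m with O => G O | S k => Rmax (max_upto G k) (G (S k)) end.

Lemma max_upto_ub G m k : (k <= m)%nat -> G k <= max_upto G m.
Proof.
  induction m as [|m IH]; intros Hk; simpl.
  - replace k with 0%nat by lia. lra.
  - destruct (Nat.eq_dec k (S m)) as [->|]; [apply Rmax_r|].
    eapply Rle_trans; [apply IH; lia|apply Rmax_l].
Qed.

Lemma max_upto_attained G m : exists k, (k <= m)%nat /\ max_upto G m = G k.
Proof.
  induction m as [|m [j [Hj E]]]; simpl; [exists 0%nat; split; auto|].
  apply Rmax_case_strong; intros _; [exists j|exists (S m)]; split; auto; lia.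
Qed.

Lemma ln_gt_0 x : 1 < x -> 0 < ln x.
Proof. intros. rewrite <- ln_1. apply ln_increasing; lra. Qed.

Lemma ln_le_sub_1 x : 0 < x -> ln x <= x - 1.
Proof. intros. pose proof (exp_ineq1_le (ln x)). rewrite exp_ln in *; lra. Qed.

Lemma exp_le x y : x <= y -> exp x <= exp y.
Proof.
  intros [Hlt|Heq]; [left; apply exp_increasing; assumption|right; rewrite Heq; reflexivity].
Qed.

Lemma Rpower_pos x a : 0 < Rpower x a.
Proof. apply exp_pos. Qed.

Lemma Rpower_base_1 a : Rpower 1 a = 1.
Proof. unfold Rpower. rewrite ln_1, Rmult_0_r. apply exp_0. Qed.

Lemma Rpower_inv_l x a : 0 < x -> Rpower (/ x) a = Rpower x (- a).
Proof. intros. unfold Rpower. rewrite ln_Rinv by assumption. f_equal. ring. Qed.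

Lemma Rpower_div x y a : 0 < x -> 0 < y -> Rpower (x / y) a = Rpower x a / Rpower y a.
Proof.
  intros. unfold Rdiv.
  rewrite <- Rpower_mult_distr, Rpower_inv_l, Rpower_Ropp;
    try reflexivity; try assumption; apply Rinv_0_lt_compat; assumption.
Qed.

Lemma Rpower_sub_1_div_pos x c : 1 < x -> c <> 0 -> 0 < (Rpower x c - 1) / c.
Proof.
  intros Hx Hc. pose proof (ln_gt_0 x Hx). unfold Rpower.
  destruct (Rtotal_order c 0) as [Hneg|[|Hpos]]; [|contradiction|].
  - assert (exp (c * ln x) < exp 0) by (apply exp_increasing; nra). rewrite exp_0 in *.
    replace ((exp (c * ln x) - 1) / c) with ((1 - exp (c * ln x)) / - c) by (field; lra).
    apply Rdiv_lt_0_compat; lra.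
  - assert (exp 0 < exp (c * ln x)) by (apply exp_increasing; nra). rewrite exp_0 in *.
    apply Rdiv_lt_0_compat; lra.
Qed.

Lemma Rpower_split x a : 0 < x -> Rpower x a = x * Rpower x (a - 1).
Proof.
  intros Hx. replace a with (1 + (a - 1)) at 1 by ring. rewrite Rpower_plus, Rpower_1; auto.
Qed.

Lemma Rpower_diff_mul_exponent_ge0 x y c : 0 < x -> x <= y ->
  0 <= (Rpower y c - Rpower x c) * c.
Proof.
  intros Hx Hxy. unfold Rpower. assert (ln x <= ln y) by (apply ln_le; assumption).
  destruct (Rle_dec 0 c).
  - assert (exp (c * ln x) <= exp (c * ln y)) by (apply exp_le; nra). nra.
  - assert (exp (c * ln y) <= exp (c * ln x)) by (apply exp_le; nra). nra.
Qed.

Lemma bernoulli_Rpower x a : 0 < x -> 0 <= a * (a - 1) * (Rpower x a - 1 - a * (x - 1)).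
Proof.
  intros Hx.
  set (f := fun x => Rpower x a - 1 - a * (x - 1)).
  set (df := fun c => a * (Rpower c (a - 1) - 1)).
  assert (Hd : forall c, 0 < c -> derivable_pt_lim f c (df c)).
  { intros c Hc. apply is_derive_Reals. unfold f, df, Rpower. auto_derive; [assumption|].
    replace ((a - 1) * ln c) with (a * ln c + - ln c) by ring.
    rewrite exp_plus, exp_Ropp, exp_ln by assumption. field. lra. }
  assert (Hdf : forall c, 0 < c -> 0 <= (a - 1) * (Rpower c (a - 1) - 1) * (c - 1)).
  { intros c Hc. destruct (Rle_dec 1 c) as [Hc1|Hc1].
    - pose proof (Rpower_diff_mul_exponent_ge0 1 c (a - 1) ltac:(lra) Hc1) as H.
      rewrite Rpower_base_1 in H. nra.
    - pose proof (Rpower_diff_mul_exponent_ge0 c 1 (a - 1) Hc ltac:(lra)) as H.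
      rewrite Rpower_base_1 in H. nra. }
  assert (Hf1 : f 1 = 0) by (unfold f; rewrite Rpower_base_1; ring).
  change (0 <= a * (a - 1) * f x).
  destruct (Req_dec x 1) as [->|Hx1]; [rewrite Hf1; lra|].
  assert (HMVT : exists c, 0 < c /\ f x = df c * (x - 1) /\ 0 < (c - 1) * (x - 1)).
  { destruct (Rtotal_order x 1) as [Hlt|[|Hgt]]; [|contradiction|].
    - destruct (MVT_cor2 f df x 1 Hlt) as [c [E Hc]]; [intros; apply Hd; lra|].
      exists c. repeat split; [lra|lra|nra].
    - destruct (MVT_cor2 f df 1 x Hgt) as [c [E Hc]]; [intros; apply Hd; lra|].
      exists c. repeat split; [lra|lra|nra]. }
  destruct HMVT as [c [Hc [E Hsign]]].
  pose proof (Hdf c Hc) as Hdfc.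
  rewrite E. unfold df.
  replace (a * (a - 1) * (a * (Rpower c (a - 1) - 1) * (x - 1)))
    with (a * a * ((a - 1) * (Rpower c (a - 1) - 1) * (x - 1))) by ring.
  apply Rmult_le_pos; [nra|].
  set (P := (a - 1) * (Rpower c (a - 1) - 1)) in *.
  assert (0 <= P * (c - 1) * ((c - 1) * (x - 1))) by (apply Rmult_le_pos; lra).
  assert (0 < (c - 1) * (c - 1)).
  { apply Rlt_0_sqr. intros Hc1. rewrite Hc1 in Hsign. lra. }
  nra.
Qed.

Lemma weighted_AM_GM p q a : 0 < p -> 0 < q ->
  0 <= a * (a - 1) * (Rpower p a * Rpower q (1 - a) - (a * p + (1 - a) * q)).
Proof.
  intros Hp Hq.
  pose proof (bernoulli_Rpower (p / q) a ltac:(apply Rdiv_lt_0_compat; assumption)) as Hb.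
  rewrite Rpower_div in Hb by assumption.
  assert (Eq : Rpower q a * Rpower q (1 - a) = q).
  { rewrite <- Rpower_plus. replace (a + (1 - a)) with 1 by ring. apply Rpower_1. assumption. }
  pose proof (Rpower_pos q a). pose proof (Rpower_pos q (1 - a)).
  replace (Rpower p a * Rpower q (1 - a) - (a * p + (1 - a) * q))
    with (q * (Rpower p a / Rpower q a - 1 - a * (p / q - 1))).
  2:{ set (qa := Rpower q a) in *. set (q1a := Rpower q (1 - a)) in *.
      rewrite <- Eq. field. split; lra. }
  replace (a * (a - 1) * (q * (Rpower p a / Rpower q a - 1 - a * (p / q - 1))))
    with (q * (a * (a - 1) * (Rpower p a / Rpower q a - 1 - a * (p / q - 1)))) by ring.
  apply Rmult_le_pos; lra.
Qed.

Lemma le_Rmax_endpoints (f P s : R -> R) a b : a < b ->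
  (forall x, a <= x <= b -> derivable_pt_lim f x (P x * s x)) ->
  (forall x, a <= x <= b -> 0 < P x) ->
  (forall x y, a <= x -> x <= y -> y <= b -> s x <= s y) ->
  forall t, a <= t <= b -> f t <= Rmax (f a) (f b).
Proof.
  intros Hab Hf HP Hs t Ht.
  (* f' changes sign at most once, from - to +: f decreases on [a, t] if s t <= 0,
     and increases on [t, b] otherwise *)
  destruct (Rle_dec (s t) 0) as [Hst|Hst].
  - destruct (Req_dec t a) as [->|Hta]; [apply Rmax_l|].
    destruct (MVT_cor2 f (fun x => P x * s x) a t) as [c [E Hc]]; [lra|intros; apply Hf; lra|].
    assert (P c * s c <= 0)
      by (pose proof (HP c ltac:(lra)); pose proof (Hs c t ltac:(lra) ltac:(lra) ltac:(lra)); nra).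
    assert (f t - f a <= 0) by (rewrite E; apply Rmult_le_0_r; lra).
    eapply Rle_trans; [|apply Rmax_l]. lra.
  - destruct (Req_dec t b) as [->|Htb]; [apply Rmax_r|].
    destruct (MVT_cor2 f (fun x => P x * s x) t b) as [c [E Hc]]; [lra|intros; apply Hf; lra|].
    assert (0 <= P c * s c)
      by (pose proof (HP c ltac:(lra)); pose proof (Hs t c ltac:(lra) ltac:(lra) ltac:(lra)); nra).
    assert (0 <= f b - f t) by (rewrite E; apply Rmult_le_pos; lra).
    eapply Rle_trans; [|apply Rmax_r]. lra.
Qed.

Section GridMax.
Variables (g : R -> R) (Delta b : R).
Hypothesis g_le : forall x, 0 <= x <= 1 -> g x <= Delta.
Hypothesis b_range : 0 <= b <= 1.
Hypothesis g_b : g b = Delta.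
Hypothesis g_cont : continuity_pt g b.

Definition grid_max (n : nat) : R := max_upto (fun k => g (INR k / INR n)) n.

Lemma grid_max_le n : (1 <= n)%nat -> grid_max n <= Delta.
Proof.
  intros Hn. unfold grid_max.
  destruct (max_upto_attained (fun k => g (INR k / INR n)) n) as [k [Hk ->]].
  apply g_le. assert (0 < INR n) by (apply lt_0_INR; lia).
  assert (INR k <= INR n) by (apply le_INR; assumption).
  split; [apply Rdiv_le_0_compat; auto using pos_INR|apply (Rdiv_le_1 (INR k) (INR n)); lra].
Qed.

Lemma grid_max_cv : Un_cv grid_max Delta.
Proof.
  (* squeeze between g (floor (n b) / n), which tends to g b, and Delta *)
  set (k := fun n =>
    proj1_sig (nfloor_ex (INR n * b) (Rmult_le_pos _ _ (pos_INR n) (proj1 b_range)))).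
  assert (Hk : forall n, INR (k n) <= INR n * b < INR (k n) + 1)
    by (intros n; exact (proj2_sig (nfloor_ex _ _))).
  assert (Hkn : forall n, (k n <= n)%nat).
  { intros n. apply INR_le. pose proof (Hk n). pose proof (pos_INR n). nra. }
  assert (Hgrid : is_lim_seq (fun n => INR (k n) / INR n) b).
  { assert (Hinv : is_lim_seq (fun n => / INR n) 0).
    { replace (Finite 0) with (Rbar_inv p_infty) by reflexivity.
      apply is_lim_seq_inv; [apply is_lim_seq_INR|discriminate]. }
    apply is_lim_seq_le_le_loc with (fun n => b - / INR n) (fun n => b);
      [|replace (Finite b) with (Rbar_minus b 0) by (simpl; f_equal; ring);
        apply is_lim_seq_minus'; [apply is_lim_seq_const|exact Hinv]
       |apply is_lim_seq_const].
    exists 1%nat. intros n Hn. pose proof (Hk n).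
    assert (0 < INR n) by (apply lt_0_INR; lia).
    split.
    - apply Rle_div_r; [lra|]. rewrite Rmult_minus_distr_r, Rinv_l by lra. lra.
    - apply Rle_div_l; lra. }
  apply is_lim_seq_Reals.
  apply is_lim_seq_le_le_loc with (fun n => g (INR (k n) / INR n)) (fun _ => Delta);
    [|rewrite <- g_b; apply is_lim_seq_continuous; assumption|apply is_lim_seq_const].
  exists 1%nat. intros n Hn. split.
  - apply (max_upto_ub (fun j => g (INR j / INR n))), Hkn.
  - apply grid_max_le. assumption.
Qed.

End GridMax.

Section Extremal.
Variables (rho : R) (F : nat -> (nat -> R) -> R)
  (psi : R -> R) (Psi : nat -> R -> R -> R) (g : R -> R).
Hypothesis rho_gt1 : 1 < rho.
Hypothesis F_ext : forall n Q Q', (forall i, (i < n)%nat -> Q i = Q' i) -> F n Q = F n Q'.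
Hypothesis F_normalize : forall n y, (1 <= n)%nat -> (forall i, (i < n)%nat -> 0 < y i) ->
  F n (normalize n y) = Psi n (rsum n (fun i => psi (y i))) (rsum n y).
Hypothesis Psi_endpoints : forall n C D, (1 <= n)%nat -> 0 <= D -> forall t, 1 <= t <= rho ->
  Psi n (psi t + C) (t + D)
  <= Rmax (Psi n (psi 1 + C) (1 + D)) (Psi n (psi rho + C) (rho + D)).
Hypothesis Psi_two_valued : forall n k, (1 <= n)%nat -> (k <= n)%nat ->
  Psi n (INR k * psi rho + (INR n - INR k) * psi 1) (INR k * rho + (INR n - INR k))
  = g (INR k / INR n).

Let Phi n y := Psi n (rsum n (fun i => psi (y i))) (rsum n y).

Lemma Phi_le_replace_endpoint n z m : (1 <= n)%nat -> (m < n)%nat ->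
  (forall i, (i < n)%nat -> 1 <= z i <= rho) ->
  exists v, (v = 1 \/ v = rho) /\ Phi n z <= Phi n (replace_at z m v).
Proof.
  intros Hn Hm Hz. unfold Phi.
  set (C := rsum n (fun i => if Nat.eqb i m then 0 else psi (z i))).
  set (D := rsum n (fun i => if Nat.eqb i m then 0 else z i)).
  assert (HD : 0 <= D).
  { apply rsum_nonneg. intros i Hi. destruct (Nat.eqb i m); [lra|]. specialize (Hz i Hi). lra. }
  assert (HA : forall t, rsum n (fun i => psi (replace_at z m t i)) = psi t + C)
    by (intros t; exact (rsum_replace_at n z m t psi Hm)).
  assert (HS : forall t, rsum n (replace_at z m t) = t + D)
    by (intros t; exact (rsum_replace_at n z m t (fun x => x) Hm)).
  assert (Hz_m : forall i, (i < n)%nat -> z i = replace_at z m (z m) i).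
  { intros i _. unfold replace_at. destruct (Nat.eqb_spec i m) as [->|]; reflexivity. }
  rewrite (rsum_ext n _ _ (fun i Hi => f_equal psi (Hz_m i Hi))), HA,
    (rsum_ext n _ _ Hz_m), HS.
  pose proof (Psi_endpoints n C D Hn HD (z m) (Hz m Hm)) as Hend.
  apply Rmax_Rle in Hend as [Hend|Hend]; [exists 1|exists rho]; rewrite HA, HS; auto.
Qed.

Lemma Phi_le_two_valued n y : (1 <= n)%nat -> (forall i, (i < n)%nat -> 1 <= y i <= rho) ->
  exists z, (forall i, (i < n)%nat -> z i = 1 \/ z i = rho) /\ Phi n y <= Phi n z.
Proof.
  intros Hn Hy.
  assert (Hpush : forall m, (m <= n)%nat -> exists z,
    (forall i, (i < n)%nat -> 1 <= z i <= rho) /\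
    (forall i, (i < m)%nat -> z i = 1 \/ z i = rho) /\ Phi n y <= Phi n z).
  { induction m as [|m IH]; intros Hm.
    - exists y. split; [assumption|split; [intros; lia|lra]].
    - destruct IH as [z [Hz [Hzm Hle]]]; [lia|].
      destruct (Phi_le_replace_endpoint n z m Hn ltac:(lia) Hz) as [v [Hv Hle']].
      exists (replace_at z m v). split; [|split].
      + intros i Hi. unfold replace_at. destruct (Nat.eqb i m); [destruct Hv; subst; lra|auto].
      + intros i Hi. unfold replace_at. destruct (Nat.eqb_spec i m); [assumption|apply Hzm; lia].
      + lra. }
  destruct (Hpush n (le_n n)) as [z [_ [Hz Hle]]]. exists z. auto.
Qed.

Lemma Phi_two_valued_le_grid_max n z : (1 <= n)%nat ->
  (forall i, (i < n)%nat -> z i = 1 \/ z i = rho) -> Phi n z <= grid_max g n.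
Proof.
  intros Hn Hz. destruct (rsum_two_valued n rho z Hz) as [k [Hk Hsum]].
  assert (HS : rsum n z = INR k * rho + (INR n - INR k) * 1) by exact (Hsum (fun x => x)).
  unfold Phi. rewrite (Hsum psi), HS, Rmult_1_r, Psi_two_valued by assumption.
  apply (max_upto_ub (fun j => g (INR j / INR n))). assumption.
Qed.

Lemma F_le_grid_max n Q : (1 <= n)%nat -> in_P n rho Q -> F n Q <= grid_max g n.
Proof.
  intros Hn [Hpos [Hsum Hratio]].
  destruct (exists_argmin n Q ltac:(lia)) as [i0 [Hi0 Hmin]].
  assert (Hc : 0 < Q i0) by auto.
  set (y := fun i => Q i / Q i0).
  assert (Hy : forall i, (i < n)%nat -> 1 <= y i <= rho).
  { intros i Hi. unfold y. split.
    - apply Rle_div_r; [lra|]. rewrite Rmult_1_l. auto.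
    - apply Rle_div_l; [lra|]. auto. }
  assert (HQ : F n Q = F n (normalize n y)).
  { apply F_ext. intros i Hi. unfold normalize, y.
    rewrite (rsum_ext n _ (fun i => / Q i0 * Q i)), rsum_scal_l, Hsum
      by (intros; unfold Rdiv; ring).
    field. lra. }
  rewrite HQ, F_normalize; [|assumption|intros i Hi; specialize (Hy i Hi); lra].
  destruct (Phi_le_two_valued n y Hn Hy) as [z [Hz Hle]].
  eapply Rle_trans; [exact Hle|]. apply Phi_two_valued_le_grid_max; assumption.
Qed.

Lemma in_P_step_vector n k : (1 <= n)%nat -> in_P n rho (normalize n (step_vector rho k)).
Proof.
  intros Hn.
  assert (Hb : forall i, 1 <= step_vector rho k i <= rho)
    by (intros i; unfold step_vector; destruct (Nat.ltb i k); lra).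
  assert (HS : 0 < rsum n (step_vector rho k))
    by (apply rsum_pos; [lia|intros i _; specialize (Hb i); lra]).
  unfold normalize. repeat split.
  - intros i _. specialize (Hb i). apply Rdiv_lt_0_compat; lra.
  - rewrite (rsum_ext n _ (fun i => / rsum n (step_vector rho k) * step_vector rho k i)),
      rsum_scal_l by (intros; unfold Rdiv; ring).
    field. lra.
  - intros i j _ _. pose proof (Hb i). pose proof (Hb j).
    unfold Rdiv. rewrite <- Rmult_assoc.
    apply Rmult_le_compat_r; [left; apply Rinv_0_lt_compat; lra|nra].
Qed.

Lemma F_step_vector n k : (1 <= n)%nat -> (k <= n)%nat ->
  F n (normalize n (step_vector rho k)) = g (INR k / INR n).
Proof.
  intros Hn Hk.
  rewrite F_normalize by (auto; intros i _; unfold step_vector; destruct (Nat.ltb i k); lra).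
  rewrite <- Psi_two_valued by assumption.
  rewrite (rsum_step_vector n k rho psi Hk).
  assert (HS : rsum n (step_vector rho k) = INR k * rho + (INR n - INR k) * 1)
    by exact (rsum_step_vector n k rho (fun x => x) Hk).
  rewrite HS, Rmult_1_r. reflexivity.
Qed.

Lemma is_max_over_P_grid_max n : (1 <= n)%nat -> is_max_over_P n rho (F n) (grid_max g n).
Proof.
  intros Hn. split.
  - destruct (max_upto_attained (fun k => g (INR k / INR n)) n) as [k [Hk E]].
    exists (normalize n (step_vector rho k)). split; [apply in_P_step_vector; assumption|].
    unfold grid_max. rewrite E. apply F_step_vector; assumption.
  - intros Q HQ. apply F_le_grid_max; assumption.
Qed.

Variables (Delta b : R).
Hypothesis g_le : forall x, 0 <= x <= 1 -> g x <= Delta.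
Hypothesis b_range : 0 <= b <= 1.
Hypothesis g_b : g b = Delta.
Hypothesis g_cont : continuity_pt g b.

Lemma max_over_P_cv : exists M : nat -> R,
  (forall n, (1 <= n)%nat -> is_max_over_P n rho (F n) (M n)) /\
  Un_cv M Delta /\ (forall n, (1 <= n)%nat -> M n <= Delta).
Proof.
  exists (grid_max g). split; [|split].
  - exact is_max_over_P_grid_max.
  - exact (grid_max_cv g Delta b g_le b_range g_b g_cont).
  - exact (grid_max_le g Delta g_le).
Qed.

End Extremal.

Lemma alphaDiv_ext n alpha Q Q' : (forall i, (i < n)%nat -> Q i = Q' i) ->
  alphaDiv n alpha Q (fun _ => unif n) = alphaDiv n alpha Q' (fun _ => unif n).
Proof. intros HQ. apply rsum_ext. intros i Hi. rewrite HQ by assumption. reflexivity. Qed.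

Section PowerCase.
Variables (alpha rho : R).
Hypothesis alpha_neq0 : alpha <> 0.
Hypothesis alpha_neq1 : alpha <> 1.
Hypothesis rho_gt1 : 1 < rho.

Let aa_sqr_pos : 0 < (alpha * (alpha - 1)) * (alpha * (alpha - 1)).
Proof. apply Rlt_0_sqr. intros H. apply Rmult_integral in H as [|]; lra. Qed.

(* K1 and K2 satisfy alpha (s K1) + (1 - alpha) K2 = 1 + b (rho^alpha - 1) with
   s = 1 + b (rho - 1), for every b (K1_K2_affine). Weighted AM-GM applied to s K1 and K2
   then bounds g_pow by DeltaAlpha, with equality iff s K1 = K2, i.e. at b = b_pow. *)
Definition K1 := (Rpower rho alpha - 1) / (alpha * (rho - 1)).
Definition K2 := (rho - Rpower rho alpha) / ((1 - alpha) * (rho - 1)).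

Definition Psi_pow (n : nat) (A S : R) : R :=
  (Rpower (INR n) (alpha - 1) * A * Rpower S (- alpha) - 1) / (alpha * (alpha - 1)).

Definition g_pow (b : R) : R :=
  ((1 + b * (Rpower rho alpha - 1)) * Rpower (1 + b * (rho - 1)) (- alpha) - 1)
  / (alpha * (alpha - 1)).

Definition b_pow := (K2 / K1 - 1) / (rho - 1).

Lemma K1_pos : 0 < K1.
Proof.
  unfold K1.
  replace ((Rpower rho alpha - 1) / (alpha * (rho - 1)))
    with ((Rpower rho alpha - 1) / alpha / (rho - 1)) by (field; lra).
  apply Rdiv_lt_0_compat; [apply Rpower_sub_1_div_pos|]; lra.
Qed.

Lemma K2_pos : 0 < K2.
Proof.
  assert (E : rho - Rpower rho alpha = Rpower rho alpha * (Rpower rho (1 - alpha) - 1)).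
  { rewrite Rmult_minus_distr_l, <- Rpower_plus, Rmult_1_r.
    replace (alpha + (1 - alpha)) with 1 by ring. rewrite Rpower_1 by lra. ring. }
  unfold K2. rewrite E.
  replace (Rpower rho alpha * (Rpower rho (1 - alpha) - 1) / ((1 - alpha) * (rho - 1)))
    with (Rpower rho alpha * ((Rpower rho (1 - alpha) - 1) / (1 - alpha)) / (rho - 1))
    by (field; lra).
  apply Rdiv_lt_0_compat; [apply Rmult_lt_0_compat|lra];
    [apply Rpower_pos|apply Rpower_sub_1_div_pos; lra].
Qed.

Lemma K1_K2_affine b :
  alpha * ((1 + b * (rho - 1)) * K1) + (1 - alpha) * K2 = 1 + b * (Rpower rho alpha - 1).
Proof. unfold K1, K2. field. repeat split; lra. Qed.

Lemma DeltaAlpha_pow :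
  DeltaAlpha alpha rho = (Rpower K1 alpha * Rpower K2 (1 - alpha) - 1) / (alpha * (alpha - 1)).
Proof.
  unfold DeltaAlpha.
  destruct (Req_EM_T alpha 1); [contradiction|]. destruct (Req_EM_T alpha 0); [contradiction|].
  pose proof (Rpower_sub_1_div_pos rho alpha rho_gt1 alpha_neq0).
  assert (HB : 0 < (rho - Rpower rho alpha) / (1 - alpha)).
  { replace ((rho - Rpower rho alpha) / (1 - alpha)) with (K2 * (rho - 1))
      by (unfold K2; field; lra).
    pose proof K2_pos. nra. }
  assert (E1 : K1 = (Rpower rho alpha - 1) / alpha / (rho - 1)) by (unfold K1; field; lra).
  assert (E2 : K2 = (rho - Rpower rho alpha) / (1 - alpha) / (rho - 1)) by (unfold K2; field; lra).
  assert (E3 : Rpower (rho - 1) alpha * Rpower (rho - 1) (1 - alpha) = rho - 1).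
  { rewrite <- Rpower_plus. replace (alpha + (1 - alpha)) with 1 by ring. apply Rpower_1. lra. }
  rewrite E1, E2, (Rpower_div ((Rpower rho alpha - 1) / alpha)),
    (Rpower_div ((rho - Rpower rho alpha) / (1 - alpha))) by (assumption || lra).
  pose proof (Rpower_pos (rho - 1) alpha). pose proof (Rpower_pos (rho - 1) (1 - alpha)).
  rewrite <- E3 at 1. field. split; lra.
Qed.

Lemma u_alpha_pow t :
  u_alpha alpha t = (Rpower t alpha - alpha * (t - 1) - 1) / (alpha * (alpha - 1)).
Proof.
  unfold u_alpha.
  destruct (Req_EM_T alpha 1); [contradiction|]. destruct (Req_EM_T alpha 0); [contradiction|].
  reflexivity.
Qed.

Lemma alphaDiv_normalize_pow n y : (1 <= n)%nat -> (forall i, (i < n)%nat -> 0 < y i) ->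
  alphaDiv n alpha (normalize n y) (fun _ => unif n)
  = Psi_pow n (rsum n (fun i => Rpower (y i) alpha)) (rsum n y).
Proof.
  intros Hn Hy. unfold alphaDiv, unif, normalize.
  assert (HS : 0 < rsum n y) by (apply rsum_pos; auto; lia).
  set (S := rsum n y) in *.
  assert (Np : 0 < INR n) by (apply lt_0_INR; lia).
  rewrite (rsum_ext n _ (fun i =>
      (Rpower (INR n) (alpha - 1) * Rpower S (- alpha) / (alpha * (alpha - 1))) * Rpower (y i) alpha
      + (- / (S * (alpha - 1))) * y i + / (INR n * alpha))).
  - rewrite rsum_affine. unfold Psi_pow. fold S. field. repeat split; lra.
  - intros i Hi. rewrite u_alpha_pow. specialize (Hy i Hi).
    replace (y i / S / / INR n) with (INR n * (y i * / S)) by (field; lra).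
    rewrite <- !Rpower_mult_distr, Rpower_inv_l, (Rpower_split (INR n) alpha);
      try assumption; try apply Rmult_lt_0_compat; try apply Rinv_0_lt_compat; try assumption.
    field. repeat split; lra.
Qed.

Lemma Psi_pow_endpoints n C D : (1 <= n)%nat -> 0 <= D -> forall t, 1 <= t <= rho ->
  Psi_pow n (Rpower t alpha + C) (t + D)
  <= Rmax (Psi_pow n (Rpower 1 alpha + C) (1 + D)) (Psi_pow n (Rpower rho alpha + C) (rho + D)).
Proof.
  intros Hn HD.
  assert (Np : 0 < INR n) by (apply lt_0_INR; lia).
  apply (le_Rmax_endpoints (fun t => Psi_pow n (Rpower t alpha + C) (t + D))
     (fun t => Rpower (INR n) (alpha - 1) * Rpower (t + D) (- alpha) / (t + D))
     (fun t => (D * Rpower t (alpha - 1) - C) / (alpha - 1))); [lra| | |].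
  - intros x Hx. apply is_derive_Reals. unfold Psi_pow, Rpower. auto_derive; [repeat split; lra|].
    replace ((alpha - 1) * ln x) with (alpha * ln x + - ln x) by ring.
    rewrite exp_plus, exp_Ropp, exp_ln by lra.
    field. repeat split; lra.
  - intros x Hx. apply Rdiv_lt_0_compat; [apply Rmult_lt_0_compat; apply Rpower_pos|lra].
  - intros x y Hx Hxy Hy.
    pose proof (Rpower_diff_mul_exponent_ge0 x y (alpha - 1) ltac:(lra) Hxy).
    assert (0 < (alpha - 1) * (alpha - 1)) by (assert (alpha - 1 <> 0) by lra; nra).
    assert (E : (D * Rpower y (alpha - 1) - C) / (alpha - 1)
                - (D * Rpower x (alpha - 1) - C) / (alpha - 1)
      = D * ((Rpower y (alpha - 1) - Rpower x (alpha - 1)) * (alpha - 1))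
        / ((alpha - 1) * (alpha - 1)))
      by (field; lra).
    assert (0 <= D * ((Rpower y (alpha - 1) - Rpower x (alpha - 1)) * (alpha - 1))
                 / ((alpha - 1) * (alpha - 1)))
      by (apply Rdiv_le_0_compat; [apply Rmult_le_pos|]; assumption).
    lra.
Qed.

Lemma Psi_pow_two_valued n k : (1 <= n)%nat -> (k <= n)%nat ->
  Psi_pow n (INR k * Rpower rho alpha + (INR n - INR k) * Rpower 1 alpha)
    (INR k * rho + (INR n - INR k)) = g_pow (INR k / INR n).
Proof.
  intros Hn Hk.
  assert (Np : 0 < INR n) by (apply lt_0_INR; lia).
  assert (Hb : 0 <= INR k / INR n) by (apply Rdiv_le_0_compat; auto using pos_INR).
  rewrite Rpower_base_1.
  replace (INR k * rho + (INR n - INR k)) with (INR n * (1 + INR k / INR n * (rho - 1)))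
    by (field; lra).
  replace (INR k * Rpower rho alpha + (INR n - INR k) * 1)
    with (INR n * (1 + INR k / INR n * (Rpower rho alpha - 1))) by (field; lra).
  unfold Psi_pow, g_pow. rewrite <- Rpower_mult_distr by nra.
  assert (E : Rpower (INR n) (alpha - 1) * INR n * Rpower (INR n) (- alpha) = 1).
  { rewrite (Rmult_comm (Rpower (INR n) (alpha - 1))), <- (Rpower_split (INR n) alpha),
      <- Rpower_plus
      by assumption.
    replace (alpha + - alpha) with 0 by ring. apply Rpower_O. assumption. }
  set (X := 1 + INR k / INR n * (Rpower rho alpha - 1)).
  set (Y := Rpower (1 + INR k / INR n * (rho - 1)) (- alpha)).
  replace (Rpower (INR n) (alpha - 1) * (INR n * X) * (Rpower (INR n) (- alpha) * Y))
    with (Rpower (INR n) (alpha - 1) * INR n * Rpower (INR n) (- alpha) * (X * Y)) by ring.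
  rewrite E, Rmult_1_l. reflexivity.
Qed.

Lemma g_pow_le b : 0 <= b <= 1 -> g_pow b <= DeltaAlpha alpha rho.
Proof.
  intros Hb. rewrite DeltaAlpha_pow. unfold g_pow.
  pose proof K1_pos. pose proof K2_pos.
  set (s := 1 + b * (rho - 1)).
  assert (Hs : 0 < s) by (unfold s; nra).
  pose proof (weighted_AM_GM (s * K1) K2 alpha ltac:(nra) K2_pos) as Hamgm.
  pose proof (K1_K2_affine b) as Haff. fold s in Haff.
  rewrite Haff, <- Rpower_mult_distr in Hamgm by assumption.
  assert (Hinv : Rpower s alpha * Rpower s (- alpha) = 1).
  { rewrite <- Rpower_plus. replace (alpha + - alpha) with 0 by ring. apply Rpower_O. assumption. }
  set (hstar := Rpower K1 alpha * Rpower K2 (1 - alpha)).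
  set (h := (1 + b * (Rpower rho alpha - 1)) * Rpower s (- alpha)).
  assert (Hkey : 0 <= alpha * (alpha - 1) * (hstar - h)).
  { replace (alpha * (alpha - 1) * (hstar - h))
      with (Rpower s (- alpha)
            * (alpha * (alpha - 1) * (Rpower s alpha * Rpower K1 alpha * Rpower K2 (1 - alpha)
                                      - (1 + b * (Rpower rho alpha - 1)))))
      by (unfold hstar, h; rewrite <- (Rmult_1_l (Rpower K1 alpha * _)), <- Hinv; ring).
    apply Rmult_le_pos; [left; apply Rpower_pos|assumption]. }
  pose proof aa_sqr_pos.
  assert (E : (hstar - 1) / (alpha * (alpha - 1)) - (h - 1) / (alpha * (alpha - 1))
            = alpha * (alpha - 1) * (hstar - h) / ((alpha * (alpha - 1)) * (alpha * (alpha - 1))))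
    by (field; split; lra).
  assert (0 <= alpha * (alpha - 1) * (hstar - h) / ((alpha * (alpha - 1)) * (alpha * (alpha - 1))))
    by (apply Rdiv_le_0_compat; assumption).
  lra.
Qed.

Lemma K1_le_K2_le : K1 <= K2 <= rho * K1.
Proof.
  pose proof (bernoulli_Rpower rho alpha ltac:(lra)) as B1.
  pose proof (bernoulli_Rpower rho (1 - alpha) ltac:(lra)) as B2.
  assert (Exy : Rpower rho alpha * Rpower rho (1 - alpha) = rho).
  { rewrite <- Rpower_plus. replace (alpha + (1 - alpha)) with 1 by ring. apply Rpower_1. lra. }
  pose proof (Rpower_pos rho alpha).
  assert (Hden : 0 < (alpha * (alpha - 1)) * (alpha * (alpha - 1)) * (rho - 1)).
  { apply Rmult_lt_0_compat; [exact aa_sqr_pos|lra]. }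
  unfold K1, K2. split.
  - assert (E : (rho - Rpower rho alpha) / ((1 - alpha) * (rho - 1))
                - (Rpower rho alpha - 1) / (alpha * (rho - 1))
        = alpha * (alpha - 1) * (Rpower rho alpha - 1 - alpha * (rho - 1))
          / ((alpha * (alpha - 1)) * (alpha * (alpha - 1)) * (rho - 1)))
      by (field; repeat split; lra).
    assert (0 <= alpha * (alpha - 1) * (Rpower rho alpha - 1 - alpha * (rho - 1))
                 / ((alpha * (alpha - 1)) * (alpha * (alpha - 1)) * (rho - 1)))
      by (apply Rdiv_le_0_compat; assumption).
    lra.
  - replace (1 - alpha - 1) with (- alpha) in B2 by ring.
    assert (E : rho * ((Rpower rho alpha - 1) / (alpha * (rho - 1)))
                - (rho - Rpower rho alpha) / ((1 - alpha) * (rho - 1))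
        = Rpower rho alpha
          * ((1 - alpha) * - alpha * (Rpower rho (1 - alpha) - 1 - (1 - alpha) * (rho - 1)))
          / ((alpha * (alpha - 1)) * (alpha * (alpha - 1)) * (rho - 1))).
    { set (x := Rpower rho alpha) in *. set (y := Rpower rho (1 - alpha)) in *.
      transitivity ((rho * (x - 1) * (1 - alpha) - alpha * (rho - x))
                    / (alpha * (1 - alpha) * (rho - 1))); [field; repeat split; lra|].
      replace (rho * (x - 1) * (1 - alpha) - alpha * (rho - x))
        with (- x * (y - 1 - (1 - alpha) * (rho - 1))) by (rewrite <- Exy; ring).
      field. repeat split; lra. }
    assert (0 <= Rpower rho alpha
          * ((1 - alpha) * - alpha * (Rpower rho (1 - alpha) - 1 - (1 - alpha) * (rho - 1)))
          / ((alpha * (alpha - 1)) * (alpha * (alpha - 1)) * (rho - 1)))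
      by (apply Rdiv_le_0_compat; [apply Rmult_le_pos; lra|assumption]).
    lra.
Qed.

Lemma b_pow_range : 0 <= b_pow <= 1.
Proof.
  pose proof K1_le_K2_le. pose proof K1_pos. unfold b_pow.
  assert (1 <= K2 / K1 <= rho) by (split; [apply Rle_div_r|apply Rle_div_l]; lra).
  split; [apply Rdiv_le_0_compat; lra|apply (Rdiv_le_1 _ (rho - 1)); lra].
Qed.

Lemma g_pow_b : g_pow b_pow = DeltaAlpha alpha rho.
Proof.
  pose proof K1_pos. pose proof K2_pos.
  rewrite DeltaAlpha_pow. unfold g_pow.
  assert (Es : 1 + b_pow * (rho - 1) = K2 / K1) by (unfold b_pow; field; lra).
  assert (Ea : 1 + b_pow * (Rpower rho alpha - 1) = K2)
    by (rewrite <- K1_K2_affine, Es; field; lra).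
  rewrite Es, Ea, Rpower_div by assumption.
  assert (E2 : K2 * Rpower K2 (- alpha) = Rpower K2 (1 - alpha)).
  { rewrite <- (Rpower_1 K2) at 1 by assumption. rewrite <- Rpower_plus. f_equal. }
  pose proof (Rpower_pos K1 alpha).
  rewrite <- E2, !Rpower_Ropp. field. split; [apply Rgt_not_eq, Rpower_pos|lra].
Qed.

Lemma g_pow_cont : continuity_pt g_pow b_pow.
Proof.
  pose proof b_pow_range.
  apply continuity_pt_filterlim, (ex_derive_continuous (K := R_AbsRing) (V := R_NormedModule)).
  unfold g_pow, Rpower. auto_derive. nra.
Qed.

Lemma alphaDiv_max_cv_pow : exists M : nat -> R,
  (forall n, (1 <= n)%nat ->
     is_max_over_P n rho (fun Q => alphaDiv n alpha Q (fun _ => unif n)) (M n)) /\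
  Un_cv M (DeltaAlpha alpha rho) /\ (forall n, (1 <= n)%nat -> M n <= DeltaAlpha alpha rho).
Proof.
  apply (max_over_P_cv rho (fun n Q => alphaDiv n alpha Q (fun _ => unif n))
           (fun y => Rpower y alpha) Psi_pow g_pow rho_gt1) with (b := b_pow).
  - intros n. apply alphaDiv_ext.
  - exact alphaDiv_normalize_pow.
  - exact Psi_pow_endpoints.
  - exact Psi_pow_two_valued.
  - exact g_pow_le.
  - exact b_pow_range.
  - exact g_pow_b.
  - exact g_pow_cont.
Qed.

End PowerCase.

Section LogCases.
Variable rho : R.
Hypothesis rho_gt1 : 1 < rho.

Let ln_rho_pos : 0 < ln rho.
Proof. exact (ln_gt_0 rho rho_gt1). Qed.

Definition kappa := rho * ln rho / (rho - 1).

Lemma kappa_range : 1 <= kappa <= rho.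
Proof.
  pose proof (ln_le_sub_1 rho ltac:(lra)).
  pose proof (ln_le_sub_1 (/ rho) ltac:(apply Rinv_0_lt_compat; lra)).
  rewrite ln_Rinv in * by lra.
  assert (rho * / rho = 1) by (field; lra).
  unfold kappa. split; [apply Rle_div_r|apply Rle_div_l]; nra.
Qed.

Lemma DeltaAlpha_log a : a = 0 \/ a = 1 -> DeltaAlpha a rho = kappa - 1 - ln kappa.
Proof.
  intros Ha.
  assert (E : DeltaAlpha a rho
              = rho * ln rho / (rho - 1) - ln (exp 1 * rho * ln rho / (rho - 1))).
  { unfold DeltaAlpha.
    destruct (Req_EM_T a 1); [reflexivity|]. destruct (Req_EM_T a 0); [reflexivity|]. lra. }
  pose proof kappa_range.
  rewrite E.
  replace (exp 1 * rho * ln rho / (rho - 1)) with (exp 1 * kappa) by (unfold kappa; field; lra).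
  rewrite ln_mult, ln_exp by (apply exp_pos || lra). unfold kappa. ring.
Qed.

Definition Psi_KL (n : nat) (A S : R) : R := ln (INR n) - ln S + A / S.
Definition g_KL (b : R) : R := - ln (1 + b * (rho - 1)) + b * rho * ln rho / (1 + b * (rho - 1)).
Definition b_KL := (kappa - 1) / (rho - 1).

Lemma alphaDiv_normalize_KL n y : (1 <= n)%nat -> (forall i, (i < n)%nat -> 0 < y i) ->
  alphaDiv n 1 (normalize n y) (fun _ => unif n)
  = Psi_KL n (rsum n (fun i => y i * ln (y i))) (rsum n y).
Proof.
  intros Hn Hy. unfold alphaDiv, unif, normalize.
  assert (HS : 0 < rsum n y) by (apply rsum_pos; auto; lia).
  set (S := rsum n y) in *.
  assert (Np : 0 < INR n) by (apply lt_0_INR; lia).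
  rewrite (rsum_ext n _ (fun i =>
      / S * (y i * ln (y i)) + ((ln (INR n) - ln S) / S - / S) * y i + / INR n)).
  - rewrite rsum_affine. unfold Psi_KL. fold S. field. lra.
  - intros i Hi. unfold u_alpha. destruct (Req_EM_T 1 1) as [_|]; [|congruence].
    specialize (Hy i Hi).
    replace (y i / S / / INR n) with (INR n * y i / S) by (field; lra).
    rewrite ln_div, ln_mult by (try apply Rmult_lt_0_compat; assumption).
    field. lra.
Qed.

Lemma Psi_KL_endpoints n C D : (1 <= n)%nat -> 0 <= D -> forall t, 1 <= t <= rho ->
  Psi_KL n (t * ln t + C) (t + D)
  <= Rmax (Psi_KL n (1 * ln 1 + C) (1 + D)) (Psi_KL n (rho * ln rho + C) (rho + D)).
Proof.
  intros Hn HD.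
  apply (le_Rmax_endpoints (fun t => Psi_KL n (t * ln t + C) (t + D))
     (fun t => / ((t + D) * (t + D))) (fun t => D * ln t - C)); [lra| | |].
  - intros x Hx. apply is_derive_Reals. unfold Psi_KL. auto_derive; [repeat split; lra|].
    field. lra.
  - intros x Hx. apply Rinv_0_lt_compat. nra.
  - intros x y Hx Hxy Hy. cbv beta. assert (ln x <= ln y) by (apply ln_le; lra). nra.
Qed.

Lemma Psi_KL_two_valued n k : (1 <= n)%nat -> (k <= n)%nat ->
  Psi_KL n (INR k * (rho * ln rho) + (INR n - INR k) * (1 * ln 1))
    (INR k * rho + (INR n - INR k)) = g_KL (INR k / INR n).
Proof.
  intros Hn Hk.
  assert (Np : 0 < INR n) by (apply lt_0_INR; lia).
  assert (0 <= INR k / INR n) by (apply Rdiv_le_0_compat; auto using pos_INR).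
  rewrite ln_1.
  replace (INR k * rho + (INR n - INR k)) with (INR n * (1 + INR k / INR n * (rho - 1)))
    by (field; lra).
  assert (0 < 1 + INR k / INR n * (rho - 1)) by nra.
  unfold Psi_KL, g_KL. rewrite ln_mult by lra. field. pose proof (pos_INR k). split; nra.
Qed.

Lemma g_KL_le b : 0 <= b <= 1 -> g_KL b <= DeltaAlpha 1 rho.
Proof.
  intros Hb. rewrite DeltaAlpha_log by auto. pose proof kappa_range.
  set (s := 1 + b * (rho - 1)).
  assert (Hs : 0 < s) by (unfold s; nra).
  assert (E : g_KL b = - ln s + kappa - kappa / s)
    by (unfold g_KL, kappa, s in *; field; split; lra).
  pose proof (ln_le_sub_1 (kappa / s) ltac:(apply Rdiv_lt_0_compat; lra)).
  rewrite ln_div in * by lra. lra.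
Qed.

Lemma b_KL_range : 0 <= b_KL <= 1.
Proof.
  pose proof kappa_range. unfold b_KL.
  split; [apply Rdiv_le_0_compat|apply (Rdiv_le_1 _ (rho - 1))]; lra.
Qed.

Lemma g_KL_b : g_KL b_KL = DeltaAlpha 1 rho.
Proof.
  rewrite DeltaAlpha_log by auto. pose proof kappa_range.
  assert (Es : 1 + b_KL * (rho - 1) = kappa) by (unfold b_KL; field; lra).
  unfold g_KL. rewrite Es. unfold b_KL, kappa. field. repeat split; lra.
Qed.

Lemma g_KL_cont : continuity_pt g_KL b_KL.
Proof.
  pose proof b_KL_range.
  apply continuity_pt_filterlim, (ex_derive_continuous (K := R_AbsRing) (V := R_NormedModule)).
  unfold g_KL. auto_derive. split; nra.
Qed.

Lemma alphaDiv_max_cv_KL : exists M : nat -> R,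
  (forall n, (1 <= n)%nat ->
     is_max_over_P n rho (fun Q => alphaDiv n 1 Q (fun _ => unif n)) (M n)) /\
  Un_cv M (DeltaAlpha 1 rho) /\ (forall n, (1 <= n)%nat -> M n <= DeltaAlpha 1 rho).
Proof.
  apply (max_over_P_cv rho (fun n Q => alphaDiv n 1 Q (fun _ => unif n))
           (fun y => y * ln y) Psi_KL g_KL rho_gt1) with (b := b_KL).
  - intros n. apply alphaDiv_ext.
  - exact alphaDiv_normalize_KL.
  - exact Psi_KL_endpoints.
  - exact Psi_KL_two_valued.
  - exact g_KL_le.
  - exact b_KL_range.
  - exact g_KL_b.
  - exact g_KL_cont.
Qed.

Definition Psi_rKL (n : nat) (A S : R) : R := - ln (INR n) + ln S - A / INR n.
Definition g_rKL (b : R) : R := ln (1 + b * (rho - 1)) - b * ln rho.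
Definition b_rKL := (rho / kappa - 1) / (rho - 1).

Lemma alphaDiv_normalize_rKL n y : (1 <= n)%nat -> (forall i, (i < n)%nat -> 0 < y i) ->
  alphaDiv n 0 (normalize n y) (fun _ => unif n)
  = Psi_rKL n (rsum n (fun i => ln (y i))) (rsum n y).
Proof.
  intros Hn Hy. unfold alphaDiv, unif, normalize.
  assert (HS : 0 < rsum n y) by (apply rsum_pos; auto; lia).
  set (S := rsum n y) in *.
  assert (Np : 0 < INR n) by (apply lt_0_INR; lia).
  rewrite (rsum_ext n _ (fun i => (- / INR n) * ln (y i) + 0 * y i + (ln S - ln (INR n)) / INR n)).
  - rewrite rsum_affine. unfold Psi_rKL. fold S. field. lra.
  - intros i Hi. unfold u_alpha.
    destruct (Req_EM_T 0 1); [lra|]. destruct (Req_EM_T 0 0) as [_|]; [|congruence].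
    specialize (Hy i Hi).
    replace (y i / S / / INR n) with (INR n * y i / S) by (field; lra).
    rewrite ln_div, ln_mult by (try apply Rmult_lt_0_compat; assumption).
    field. lra.
Qed.

Lemma Psi_rKL_endpoints n C D : (1 <= n)%nat -> 0 <= D -> forall t, 1 <= t <= rho ->
  Psi_rKL n (ln t + C) (t + D)
  <= Rmax (Psi_rKL n (ln 1 + C) (1 + D)) (Psi_rKL n (ln rho + C) (rho + D)).
Proof.
  intros Hn HD.
  assert (Np : 1 <= INR n) by (apply (le_INR 1); lia).
  apply (le_Rmax_endpoints (fun t => Psi_rKL n (ln t + C) (t + D))
     (fun t => / (INR n * t * (t + D))) (fun t => (INR n - 1) * t - D)); [lra| | |].
  - intros x Hx. apply is_derive_Reals. unfold Psi_rKL. auto_derive; [repeat split; lra|].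
    field. repeat split; lra.
  - intros x Hx. apply Rinv_0_lt_compat. apply Rmult_lt_0_compat; [nra|lra].
  - intros x y Hx Hxy Hy. cbv beta. nra.
Qed.

Lemma Psi_rKL_two_valued n k : (1 <= n)%nat -> (k <= n)%nat ->
  Psi_rKL n (INR k * ln rho + (INR n - INR k) * ln 1) (INR k * rho + (INR n - INR k))
  = g_rKL (INR k / INR n).
Proof.
  intros Hn Hk.
  assert (Np : 0 < INR n) by (apply lt_0_INR; lia).
  assert (0 <= INR k / INR n) by (apply Rdiv_le_0_compat; auto using pos_INR).
  rewrite ln_1.
  replace (INR k * rho + (INR n - INR k)) with (INR n * (1 + INR k / INR n * (rho - 1)))
    by (field; lra).
  assert (0 < 1 + INR k / INR n * (rho - 1)) by nra.
  unfold Psi_rKL, g_rKL. rewrite ln_mult by lra. field. lra.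
Qed.

Lemma g_rKL_le b : 0 <= b <= 1 -> g_rKL b <= DeltaAlpha 0 rho.
Proof.
  intros Hb. rewrite DeltaAlpha_log by auto.
  set (s := 1 + b * (rho - 1)).
  assert (Hs : 0 < s) by (unfold s; nra).
  pose proof kappa_range.
  pose proof (ln_le_sub_1 (s * kappa / rho) ltac:(apply Rdiv_lt_0_compat; nra)).
  assert (E : s * kappa / rho - 1 = kappa / rho + b * ln rho - 1)
    by (unfold s, kappa; field; lra).
  assert (E' : kappa - kappa / rho = ln rho) by (unfold kappa; field; lra).
  rewrite ln_div, ln_mult in * by nra.
  unfold g_rKL. fold s. lra.
Qed.

Lemma b_rKL_range : 0 <= b_rKL <= 1.
Proof.
  pose proof kappa_range. unfold b_rKL.
  assert (1 <= rho / kappa <= rho) by (split; [apply Rle_div_r|apply Rle_div_l]; nra).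
  split; [apply Rdiv_le_0_compat|apply (Rdiv_le_1 _ (rho - 1))]; lra.
Qed.

Lemma g_rKL_b : g_rKL b_rKL = DeltaAlpha 0 rho.
Proof.
  rewrite DeltaAlpha_log by auto. pose proof kappa_range.
  assert (Es : 1 + b_rKL * (rho - 1) = rho / kappa) by (unfold b_rKL; field; lra).
  assert (E' : kappa - kappa / rho = ln rho) by (unfold kappa; field; lra).
  unfold g_rKL. rewrite Es, ln_div by lra. unfold b_rKL. rewrite <- E'. field. lra.
Qed.

Lemma g_rKL_cont : continuity_pt g_rKL b_rKL.
Proof.
  pose proof b_rKL_range.
  apply continuity_pt_filterlim, (ex_derive_continuous (K := R_AbsRing) (V := R_NormedModule)).
  unfold g_rKL. auto_derive. nra.
Qed.

Lemma alphaDiv_max_cv_rKL : exists M : nat -> R,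
  (forall n, (1 <= n)%nat ->
     is_max_over_P n rho (fun Q => alphaDiv n 0 Q (fun _ => unif n)) (M n)) /\
  Un_cv M (DeltaAlpha 0 rho) /\ (forall n, (1 <= n)%nat -> M n <= DeltaAlpha 0 rho).
Proof.
  apply (max_over_P_cv rho (fun n Q => alphaDiv n 0 Q (fun _ => unif n))
           ln Psi_rKL g_rKL rho_gt1) with (b := b_rKL).
  - intros n. apply alphaDiv_ext.
  - exact alphaDiv_normalize_rKL.
  - exact Psi_rKL_endpoints.
  - exact Psi_rKL_two_valued.
  - exact g_rKL_le.
  - exact b_rKL_range.
  - exact g_rKL_b.
  - exact g_rKL_cont.
Qed.

End LogCases.

Lemma alphaDiv_max_cv alpha rho : 1 < rho -> exists M : nat -> R,
  (forall n, (1 <= n)%nat ->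
     is_max_over_P n rho (fun Q => alphaDiv n alpha Q (fun _ => unif n)) (M n)) /\
  Un_cv M (DeltaAlpha alpha rho) /\ (forall n, (1 <= n)%nat -> M n <= DeltaAlpha alpha rho).
Proof.
  intros Hrho.
  destruct (Req_dec alpha 1) as [->|H1]; [exact (alphaDiv_max_cv_KL rho Hrho)|].
  destruct (Req_dec alpha 0) as [->|H0]; [exact (alphaDiv_max_cv_rKL rho Hrho)|].
  exact (alphaDiv_max_cv_pow alpha rho H0 H1 Hrho).
Qed.

Lemma KL_eq_alphaDiv_1 n b Q : 1 < b -> rsum n Q = 1 ->
  KL n b Q (fun _ => unif n) = alphaDiv n 1 Q (fun _ => unif n) / ln b.
Proof.
  intros Hb HQ. pose proof (ln_gt_0 b Hb).
  assert (Hn : 0 < INR n) by (destruct n; [simpl in HQ; lra|apply lt_0_INR; lia]).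
  unfold alphaDiv, KL, unif.
  rewrite (rsum_ext n (fun x => / INR n * _)
             (fun x => ln b * (Q x * log_b b (Q x / / INR n)) + (-1) * Q x + / INR n)).
  - rewrite rsum_affine, HQ. field. lra.
  - intros i Hi. unfold u_alpha. destruct (Req_EM_T 1 1) as [_|]; [|congruence].
    unfold log_b. field. lra.
Qed.

Lemma is_max_over_P_div n rho F F' m c : 0 < c ->
  (forall Q, in_P n rho Q -> F' Q = F Q / c) ->
  is_max_over_P n rho F m -> is_max_over_P n rho F' (m / c).
Proof.
  intros Hc HF [[Q [HQ EQ]] Hmax]. split.
  - exists Q. split; [assumption|]. rewrite HF, EQ by assumption. reflexivity.
  - intros Q' HQ'. rewrite HF by assumption.
    apply Rmult_le_compat_r; [left; apply Rinv_0_lt_compat|apply Hmax]; assumption.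
Qed.

Lemma KL_max_cv b rho : 1 < b -> 1 < rho -> exists M : nat -> R,
  (forall n, (1 <= n)%nat -> is_max_over_P n rho (fun Q => KL n b Q (fun _ => unif n)) (M n)) /\
  Un_cv M (DeltaAlpha 1 rho / ln b) /\
  (forall n, (1 <= n)%nat -> M n <= DeltaAlpha 1 rho / ln b).
Proof.
  intros Hb Hrho. pose proof (ln_gt_0 b Hb).
  destruct (alphaDiv_max_cv 1 rho Hrho) as [M [Hmax [Hcv Hle]]].
  exists (fun n => M n / ln b). split; [|split].
  - intros n Hn. apply (is_max_over_P_div n rho (fun Q => alphaDiv n 1 Q (fun _ => unif n)));
      [assumption| |apply Hmax, Hn].
    intros Q [_ [HQ _]]. apply KL_eq_alphaDiv_1; assumption.
  - apply is_lim_seq_Reals, (is_lim_seq_scal_r M (/ ln b) (DeltaAlpha 1 rho)), is_lim_seq_Reals.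
    assumption.
  - intros n Hn. apply Rmult_le_compat_r; [left; apply Rinv_0_lt_compat; assumption|auto].
Qed.

Lemma KL_bound_eq b rho :
  rho * log_b b rho / (rho - 1) - log_b b (exp 1 * rho * ln rho / (rho - 1))
  = DeltaAlpha 1 rho / ln b.
Proof.
  unfold DeltaAlpha, log_b, Rdiv. destruct (Req_EM_T 1 1) as [_|]; [ring|congruence].
Qed.

Theorem mainTheorem9 :
  (forall (alpha rho : R), 1 < rho ->
     exists M : nat -> R,
       (forall n : nat, (1 <= n)%nat ->
          is_max_over_P n rho (fun Q => alphaDiv n alpha Q (fun _ => unif n)) (M n)) /\
       Un_cv M (DeltaAlpha alpha rho)) /\
  (forall (b rho : R), 1 < b -> 1 < rho ->
     (forall n : nat, (2 <= n)%nat -> forall Q, in_P n rho Q ->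
        KL n b Q (fun _ => unif n) <=
          rho * log_b b rho / (rho - 1) - log_b b (exp 1 * rho * ln rho / (rho - 1))) /\
     exists M : nat -> R,
       (forall n : nat, (1 <= n)%nat ->
          is_max_over_P n rho (fun Q => KL n b Q (fun _ => unif n)) (M n)) /\
       Un_cv M (rho * log_b b rho / (rho - 1) - log_b b (exp 1 * rho * ln rho / (rho - 1)))).
Proof.
  split.
  - intros alpha rho Hrho.
    destruct (alphaDiv_max_cv alpha rho Hrho) as [M [Hmax [Hcv _]]]. exists M. split; assumption.
  - intros b rho Hb Hrho. rewrite KL_bound_eq.
    destruct (KL_max_cv b rho Hb Hrho) as [M [Hmax [Hcv Hle]]]. split.
    + intros n Hn Q HQ. apply Rle_trans with (M n); [apply (Hmax n ltac:(lia))|apply Hle; lia].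
      assumption.
    + exists M. split; assumption.
Qed.
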